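(* Let $0<\delta<1$, $t>1$, $\lambda_c:=1/(t^{1-\delta}-1)$, $\lambda_c\le\lambda\le t^{1-\delta}-1$, let $0<k<t^{\delta-1}$, and let $\phi$ satisfy $0<\phi<\pi/2$ if $\ln\lambda\ge0$ and $0<\phi<\arctan(\pi/|\ln\lambda|)$ if $\ln\lambda<0$. For $z$ on the contour $\{z=1-k+R{\rm e}^{{\rm i}\phi}:0\le R<\infty\}$, $$\left|\frac{\partial F}{\partial z}(z;\lambda)\right|>\min\!\left(\frac{\pi}{2}-\phi,\ \ln\!\left(\frac{t^{\delta-1}}{k}\right)\right),$$ and for sufficiently large $R$, $\left|\frac{\partial F}{\partial z}\right|>\frac{\pi}{2}-\phi$.
   Context: $F(z;\lambda):=(1-z)\ln(1-z)+z\ln z+z\ln\lambda$, with branch cuts $(-\infty,0]$ and $[1,\infty)$. *)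

From Stdlib Require Import Reals.
From Coquelicot Require Import Coquelicot.
Open Scope R_scope.

(* Principal argument Arg z in (-PI, PI] (branch cut along the negative real axis). *)
Definition Arg (z : C) : R :=
  let x := fst z in let y := snd z in
  if Rlt_dec 0 x then atan (y / x)
  else if Rlt_dec x 0 then
    (if Rle_dec 0 y then atan (y / x) + PI else atan (y / x) - PI)
  else (if Rlt_dec 0 y then PI / 2 else if Rlt_dec y 0 then - (PI / 2) else 0).

Definition Clog (z : C) : C := (ln (Cmod z), Arg z).

(* F(z; lambda) = (1-z) ln(1-z) + z ln z + z ln lambda, with principal logs:
   ln z has cut (-oo,0], ln(1-z) has cut [1,oo) in the z-plane. *)
Definition F (lam : R) (z : C) : C :=
  Cplus (Cplus (Cmult (Cminus (RtoC 1) z) (Clog (Cminus (RtoC 1) z)))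
               (Cmult z (Clog z)))
        (Cmult z (RtoC (ln lam))).

Definition contour (k phi R : R) : C :=
  Cplus (RtoC (1 - k)) (Cmult (RtoC R) (cos phi, sin phi)).

From Stdlib Require Import Reals Lra.
From Coquelicot Require Import Coquelicot.
Open Scope R_scope.

(* F'(z) = Log z - Log (1 - z) + ln lam.  The contour starts at 1 - k, on the
   Apollonius circle k |z| = (1 - k) |1 - z|, and eventually leaves the disc it
   bounds.  Inside the disc, Re F'(z) = ln (lam |z| / |1 - z|) >= ln (lam (1 - k) / k),
   which exceeds ln (t^(delta-1) / k) because lam (t^(1-delta) - 1) >= 1 and
   k t^(1-delta) < 1.  Outside it, writing z = x + i y,
   Im F'(z) = PI/2 + atan (y / x) - atan ((1 - x) / y), and the difference of
   arctangents stays below phi as soon as cos phi (x (1 - x) - y^2) < y sin phi;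
   this holds outside the disc and also for every R >= 2.  The complex derivative
   of the principal logarithm comes from its real partial derivatives through the
   Cauchy-Riemann equations. *)

Local Notation C_AbsNormedModule := (AbsRing_NormedModule C_AbsRing).

Lemma differentiable_pt_lim_fst x y : differentiable_pt_lim (fun u _ => u) x y 1 0.
Proof.
  apply filterdiff_differentiable_pt_lim.
  eapply filterdiff_ext_lin; [apply filterdiff_linear, is_linear_fst|].
  intros [u v]; simpl; lra.
Qed.

Lemma differentiable_pt_lim_snd x y : differentiable_pt_lim (fun _ v => v) x y 0 1.
Proof.
  apply filterdiff_differentiable_pt_lim.
  eapply filterdiff_ext_lin; [apply filterdiff_linear, is_linear_snd|].
  intros [u v]; simpl; lra.
Qed.

Lemma differentiable_pt_lim_Rplus x y : differentiable_pt_lim Rplus x y 1 1.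
Proof.
  apply filterdiff_differentiable_pt_lim.
  eapply filterdiff_ext_lin;
    [exact (filterdiff_linear _ (@is_linear_plus R_AbsRing R_NormedModule))|].
  intros [u v]; simpl; unfold plus; simpl; lra.
Qed.

Lemma differentiable_pt_lim_Rmult x y : differentiable_pt_lim Rmult x y y x.
Proof.
  apply filterdiff_differentiable_pt_lim.
  eapply filterdiff_ext_lin.
  - apply (@filterdiff_mult R_AbsRing _ _ (x, y)); [now intros P HP | exact Rmult_comm].
  - intros [u v]; simpl; unfold plus, mult; simpl; lra.
Qed.

Lemma differentiable_pt_lim_eq f x y lx ly lx' ly' :
  differentiable_pt_lim f x y lx ly -> lx = lx' -> ly = ly' ->
  differentiable_pt_lim f x y lx' ly'.
Proof. now intros H -> ->. Qed.

Lemma differentiable_pt_lim_comp_R (g : R -> R) dg f x y fx fy :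
  derivable_pt_lim g (f x y) dg -> differentiable_pt_lim f x y fx fy ->
  differentiable_pt_lim (fun u v => g (f u v)) x y (dg * fx) (dg * fy).
Proof.
  intros Hg Hf.
  eapply differentiable_pt_lim_eq;
    [exact (differentiable_pt_lim_comp (fun a _ => g a) f f x y dg 0 fx fy fx fy
              (differentiable_pt_lim_proj1_0 g (f x y) (f x y) dg Hg) Hf Hf) | ring | ring].
Qed.

Lemma differentiable_pt_lim_plus f g x y fx fy gx gy :
  differentiable_pt_lim f x y fx fy -> differentiable_pt_lim g x y gx gy ->
  differentiable_pt_lim (fun u v => f u v + g u v) x y (fx + gx) (fy + gy).
Proof.
  intros Hf Hg.
  eapply differentiable_pt_lim_eq;
    [exact (differentiable_pt_lim_comp Rplus f g x y 1 1 fx fy gx gy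
              (differentiable_pt_lim_Rplus _ _) Hf Hg) | ring | ring].
Qed.

Lemma differentiable_pt_lim_mult f g x y fx fy gx gy :
  differentiable_pt_lim f x y fx fy -> differentiable_pt_lim g x y gx gy ->
  differentiable_pt_lim (fun u v => f u v * g u v) x y
    (g x y * fx + f x y * gx) (g x y * fy + f x y * gy).
Proof.
  intros Hf Hg.
  exact (differentiable_pt_lim_comp Rmult f g x y _ _ fx fy gx gy
           (differentiable_pt_lim_Rmult _ _) Hf Hg).
Qed.

Lemma Cmod_le_2Rmax z : Cmod z <= 2 * Rmax (Rabs (fst z)) (Rabs (snd z)).
Proof.
  eapply Rle_trans; [apply Cmod_2Rmax|].
  apply Rmult_le_compat_r; [eapply Rle_trans; [apply Rabs_pos | apply Rmax_l]|].
  rewrite <- (sqrt_Rsqr 2) at 2 by lra. apply sqrt_le_1_alt; unfold Rsqr; lra.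
Qed.

Lemma is_derive_C_of_partials (f : C -> C) (x y a b : R) :
  differentiable_pt_lim (fun u v => fst (f (u, v))) x y a (- b) ->
  differentiable_pt_lim (fun u v => snd (f (u, v))) x y b a ->
  @is_derive C_AbsRing C_AbsNormedModule f (x, y) (a, b).
Proof.
  intros Hre Him. split; [apply is_linear_scal_l|].
  intros z Hz.
  apply (@is_filter_lim_locally_unique _ C_AbsNormedModule) in Hz; subst z.
  intros [eps Heps].
  assert (Heps2 : 0 < eps / 2) by lra.
  destruct (Hre (mkposreal _ Heps2)) as [d1 H1].
  destruct (Him (mkposreal _ Heps2)) as [d2 H2].
  exists (mkposreal _ (Rmin_pos _ _ (cond_pos d1) (cond_pos d2))).
  intros [u v] Huv.
  assert (Hh : Rmax (Rabs (u - x)) (Rabs (v - y)) <= Cmod (Cminus (u, v) (x, y))).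
  { pose proof (Rmax_Cmod (Cminus (u, v) (x, y))) as Hmax; simpl in Hmax.
    now rewrite <- !Rminus_def in Hmax. }
  set (h := Cminus (u, v) (x, y)) in *.
  change (Cmod h < Rmin d1 d2) in Huv.
  change (Cmod (Cminus (Cminus (f (u, v)) (f (x, y))) (Cmult h (a, b))) <= eps * Cmod h).
  pose proof (Rmin_l d1 d2); pose proof (Rmin_r d1 d2).
  pose proof (Rmax_l (Rabs (u - x)) (Rabs (v - y))).
  pose proof (Rmax_r (Rabs (u - x)) (Rabs (v - y))).
  specialize (H1 u v ltac:(lra) ltac:(lra)).
  specialize (H2 u v ltac:(lra) ltac:(lra)).
  set (M := Rmax (Rabs (u - x)) (Rabs (v - y))) in *.
  eapply Rle_trans; [apply Cmod_le_2Rmax|].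
  assert (Herr : Rmax (Rabs (fst (Cminus (Cminus (f (u, v)) (f (x, y))) (Cmult h (a, b)))))
                      (Rabs (snd (Cminus (Cminus (f (u, v)) (f (x, y))) (Cmult h (a, b)))))
                 <= eps / 2 * M).
  { apply Rmax_lub; [eapply Rle_trans; [|exact H1] | eapply Rle_trans; [|exact H2]];
      right; simpl; f_equal; ring. }
  assert (0 <= eps * Cmod h - eps * M) by (rewrite <- Rmult_minus_distr_l; apply Rmult_le_pos; lra).
  lra.
Qed.

Lemma Arg_right u v : 0 < u -> Arg (u, v) = atan (v / u).
Proof. intros Hu. unfold Arg; simpl. destruct (Rlt_dec 0 u); [reflexivity | lra]. Qed.

Lemma Arg_lower u v : v < 0 -> Arg (u, v) = - (PI / 2) - atan (u / v).
Proof.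
  intros Hv. unfold Arg; simpl.
  destruct (Rlt_dec 0 u) as [Hu|Hu]; [|destruct (Rlt_dec u 0) as [Hu'|Hu']].
  - replace (v / u) with (- / (u / - v)) by (field; lra).
    rewrite atan_opp, atan_inv by (apply Rdiv_lt_0_compat; lra).
    replace (u / - v) with (- (u / v)) by (field; lra).
    rewrite atan_opp; ring.
  - destruct (Rle_dec 0 v); [lra|].
    replace (v / u) with (/ (u / v)) by (field; lra).
    rewrite atan_inv; [lra|].
    replace (u / v) with (- u / - v) by (field; lra).
    apply Rdiv_lt_0_compat; lra.
  - replace u with 0 by lra.
    destruct (Rlt_dec 0 v); [lra|]. destruct (Rlt_dec v 0); [|lra].
    unfold Rdiv; rewrite Rmult_0_l, atan_0; ring.
Qed.

Lemma differentiable_pt_lim_Re_Clog x y : 0 < x ^ 2 + y ^ 2 ->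
  differentiable_pt_lim (fun u v => fst (Clog (u, v))) x y
    (x / (x ^ 2 + y ^ 2)) (y / (x ^ 2 + y ^ 2)).
Proof.
  intros Hr.
  assert (Hsq : forall r, derivable_pt_lim (fun s => s ^ 2) r (2 * r)).
  { intros r. apply is_derive_Reals. auto_derive; [easy | ring]. }
  assert (Hlnsqrt : derivable_pt_lim (fun s => ln (sqrt s)) (x ^ 2 + y ^ 2)
                                     (/ (2 * (x ^ 2 + y ^ 2)))).
  { pose proof (sqrt_lt_R0 _ Hr). apply is_derive_Reals. auto_derive; [easy|].
    rewrite <- (sqrt_sqrt (x ^ 2 + y ^ 2)) at 3 by lra. field; lra. }
  eapply differentiable_pt_lim_eq;
    [exact (differentiable_pt_lim_comp_R _ _ _ x y _ _ Hlnsqrt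
             (differentiable_pt_lim_plus _ _ x y _ _ _ _
                (differentiable_pt_lim_comp_R _ _ _ x y _ _ (Hsq x)
                   (differentiable_pt_lim_fst x y))
                (differentiable_pt_lim_comp_R _ _ _ x y _ _ (Hsq y)
                   (differentiable_pt_lim_snd x y))))
    | field; lra | field; lra].
Qed.

Lemma differentiable_pt_lim_Im_Clog_right x y : 0 < x ->
  differentiable_pt_lim (fun u v => snd (Clog (u, v))) x y
    (- y / (x ^ 2 + y ^ 2)) (x / (x ^ 2 + y ^ 2)).
Proof.
  intros Hx.
  apply differentiable_pt_lim_ext with (f1 := fun u v => atan (v * / u)).
  { exists (mkposreal x Hx). intros u v Hu _. simpl in Hu. apply Rabs_def2 in Hu.
    unfold Clog; simpl. rewrite Arg_right by lra. reflexivity. }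
  assert (Hinv : derivable_pt_lim Rinv x (- / x ^ 2)).
  { apply is_derive_Reals. auto_derive; [lra | field; lra]. }
  eapply differentiable_pt_lim_eq;
    [exact (differentiable_pt_lim_comp_R atan _ _ x y _ _ (derivable_pt_lim_atan _)
             (differentiable_pt_lim_mult _ _ x y _ _ _ _ (differentiable_pt_lim_snd x y)
                (differentiable_pt_lim_comp_R _ _ _ x y _ _ Hinv (differentiable_pt_lim_fst x y))))
    | cbv beta; field; split; [nra | lra] ..].
Qed.

Lemma differentiable_pt_lim_Im_Clog_lower x y : y < 0 ->
  differentiable_pt_lim (fun u v => snd (Clog (u, v))) x y
    (- y / (x ^ 2 + y ^ 2)) (x / (x ^ 2 + y ^ 2)).
Proof.
  intros Hy.
  apply differentiable_pt_lim_ext with (f1 := fun u v => - (PI / 2) - atan (u * / v)).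
  { assert (Hy' : 0 < - y) by lra.
    exists (mkposreal _ Hy'). intros u v _ Hv. simpl in Hv. apply Rabs_def2 in Hv.
    unfold Clog; simpl. rewrite Arg_lower by lra. reflexivity. }
  assert (Hinv : derivable_pt_lim Rinv y (- / y ^ 2)).
  { apply is_derive_Reals. auto_derive; [lra | field; lra]. }
  assert (Hatan : derivable_pt_lim (fun s => - (PI / 2) - atan s) (x * / y)
                                   (- / (1 + (x * / y) ^ 2))).
  { apply is_derive_Reals. auto_derive; [easy | field; nra]. }
  eapply differentiable_pt_lim_eq;
    [exact (differentiable_pt_lim_comp_R _ _ _ x y _ _ Hatan
             (differentiable_pt_lim_mult _ _ x y _ _ _ _ (differentiable_pt_lim_fst x y)
                (differentiable_pt_lim_comp_R _ _ _ x y _ _ Hinv (differentiable_pt_lim_snd x y))))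
    | cbv beta; field; split; nra ..].
Qed.

Lemma is_derive_Clog z : 0 < fst z \/ snd z < 0 ->
  @is_derive C_AbsRing C_AbsNormedModule Clog z (/ z)%C.
Proof.
  destruct z as [x y]; simpl. intros Hz.
  assert (Hr : 0 < x ^ 2 + y ^ 2) by (destruct Hz; nra).
  apply is_derive_C_of_partials.
  - eapply differentiable_pt_lim_eq;
      [apply differentiable_pt_lim_Re_Clog, Hr | reflexivity | simpl; field; lra].
  - destruct Hz;
      [apply differentiable_pt_lim_Im_Clog_right | apply differentiable_pt_lim_Im_Clog_lower];
      assumption.
Qed.

Definition dF (lam : R) (z : C) : C := (Clog z - Clog (1 - z) + RtoC (ln lam))%C.

(* Coquelicot's differentiation rules produce [is_derive] over [C_AbsNormedModule],
   while the theorem is stated over [C_NormedModule]. *)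
Lemma is_derive_C_NormedModule (f : C -> C) z l :
  @is_derive C_AbsRing C_AbsNormedModule f z l ->
  @is_derive C_AbsRing C_NormedModule f z l.
Proof. intros [_ Hd]; split; [apply is_linear_scal_l | exact Hd]. Qed.

Lemma is_derive_eq {K : AbsRing} {V : NormedModule K} (f : K -> V) x l l' :
  is_derive f x l -> l = l' -> is_derive f x l'.
Proof. now intros H <-. Qed.

Lemma is_derive_F lam z : 0 < fst z -> 0 < fst (1 - z)%C \/ 0 < snd z ->
  @is_derive C_AbsRing C_NormedModule (F lam) z (dF lam z).
Proof.
  destruct z as [x y]; simpl. intros Hx Hcut.
  apply is_derive_C_NormedModule.
  assert (Hcomm : forall u v : C_AbsRing, mult u v = mult v u) by exact Cmult_comm.
  assert (Hconst : forall c : C, @is_derive _ C_AbsNormedModule (fun _ => c) (x, y) zero)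
    by (intros; apply is_derive_const).
  assert (Hid := @is_derive_id C_AbsRing (x, y)).
  assert (Hsub := is_derive_minus _ _ _ _ _ (Hconst 1%C) Hid).
  assert (Hlog := is_derive_Clog (x, y) (or_introl Hx)).
  assert (Hlog1 := @is_derive_comp _ C_AbsNormedModule Clog (fun w => (1 - w)%C) (x, y) _ _
                     (is_derive_Clog (1 - (x, y))%C ltac:(simpl; lra)) Hsub).
  pose proof (is_derive_plus _ _ _ _ _
                (is_derive_plus _ _ _ _ _ (is_derive_mult _ _ _ _ _ Hsub Hlog1 Hcomm)
                                          (is_derive_mult _ _ _ _ _ Hid Hlog Hcomm))
                (is_derive_mult _ _ _ _ _ Hid (Hconst (RtoC (ln lam))) Hcomm)) as HF.
  refine (is_derive_eq _ _ _ _ HF _).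
  cbn -[Cplus Cmult Copp Cinv Clog Cminus RtoC].
  unfold dF. field. split; intros E; injection E; lra.
Qed.

Lemma im_le_Cmod z : Rabs (snd z) <= Cmod z.
Proof. eapply Rle_trans; [apply Rmax_r | apply Rmax_Cmod]. Qed.

Lemma atan_sub_lt a b phi : 0 < b -> 0 < phi < PI / 2 ->
  (a - b) * cos phi < (1 + a * b) * sin phi -> atan a - atan b < phi.
Proof.
  intros Hb Hphi Hab.
  set (theta := atan a - atan b).
  destruct (Rlt_le_dec theta phi) as [|Hge]; [assumption | exfalso].
  assert (Hlt : theta < PI / 2).
  { pose proof (atan_bound a). pose proof (atan_increasing 0 b Hb). rewrite atan_0 in *.
    unfold theta; lra. }
  assert (Hsin : 0 <= sin (theta - phi)) by (apply sin_ge_0; pose proof PI2_1; lra).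
  assert (Hpa : 0 < sqrt (1 + a²)) by (apply sqrt_lt_R0; pose proof (Rle_0_sqr a); lra).
  assert (Hpb : 0 < sqrt (1 + b²)) by (apply sqrt_lt_R0; pose proof (Rle_0_sqr b); lra).
  assert (Hexp : sin (theta - phi) * (sqrt (1 + a²) * sqrt (1 + b²))
                 = (a - b) * cos phi - (1 + a * b) * sin phi).
  { unfold theta. rewrite sin_minus, sin_minus, cos_minus, !sin_atan, !cos_atan. field; lra. }
  pose proof (Rmult_le_pos _ _ Hsin (Rlt_le _ _ (Rmult_lt_0_compat _ _ Hpa Hpb))).
  lra.
Qed.

Lemma one_minus_pair x y : (1 - (x, y))%C = (1 - x, - y).
Proof. apply injective_projections; simpl; ring. Qed.

Lemma Im_dF lam x y : 0 < x -> 0 < y ->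
  snd (dF lam (x, y)) = PI / 2 + atan (y / x) - atan ((1 - x) / y).
Proof.
  intros Hx Hy. unfold dF. rewrite one_minus_pair. unfold Clog; simpl.
  rewrite Arg_right, Arg_lower by lra.
  replace ((1 - x) / - y) with (- ((1 - x) / y)) by (field; lra).
  rewrite atan_opp. ring.
Qed.

Lemma Im_dF_gt lam phi x y : 0 < x -> 0 < y -> 0 < phi < PI / 2 ->
  cos phi * (x * (1 - x) - y ^ 2) < sin phi * y -> PI / 2 - phi < snd (dF lam (x, y)).
Proof.
  intros Hx Hy Hphi Hcond. rewrite Im_dF by assumption.
  enough (atan ((1 - x) / y) - atan (y / x) < phi) by lra.
  apply atan_sub_lt; [apply Rdiv_lt_0_compat; assumption | assumption |].
  apply Rmult_lt_reg_r with (x * y); [nra|].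
  replace (((1 - x) / y - y / x) * cos phi * (x * y)) with (cos phi * (x * (1 - x) - y ^ 2))
    by (field; lra).
  replace ((1 + (1 - x) / y * (y / x)) * sin phi * (x * y)) with (sin phi * y)
    by (field; lra).
  assumption.
Qed.

Lemma Re_dF_ge lam k z : 0 < lam -> 0 < k < 1 -> 0 < Cmod z -> 0 < Cmod (1 - z) ->
  (1 - k) * Cmod (1 - z) <= k * Cmod z -> ln (lam * (1 - k) / k) <= fst (dF lam z).
Proof.
  intros Hlam Hk Hz H1z Hratio.
  replace (fst (dF lam z)) with (ln (lam * Cmod z / Cmod (1 - z))).
  - apply ln_le; [apply Rdiv_lt_0_compat; nra|].
    apply Rmult_le_reg_r with (k * Cmod (1 - z)); [nra|].
    replace (lam * (1 - k) / k * (k * Cmod (1 - z))) with (lam * ((1 - k) * Cmod (1 - z)))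
      by (field; lra).
    replace (lam * Cmod z / Cmod (1 - z) * (k * Cmod (1 - z))) with (lam * (k * Cmod z))
      by (field; lra).
    apply Rmult_le_compat_l; lra.
  - unfold dF; simpl. rewrite ln_div, ln_mult by nra. ring.
Qed.

Lemma contour_eq k phi R : contour k phi R = (1 - k + R * cos phi, R * sin phi).
Proof. apply injective_projections; simpl; ring. Qed.

Section Contour.

Variables (lam k phi R : R).
Hypotheses (Hk : 0 < k < 1) (Hphi : 0 < phi < PI / 2) (HR : 0 <= R).

Let c := cos phi.
Let s := sin phi.

Lemma cos_phi_pos : 0 < c.
Proof. apply cos_gt_0; lra. Qed.

Lemma sin_phi_pos : 0 < s.
Proof. apply sin_gt_0; pose proof PI2_1; lra. Qed.

Lemma is_derive_F_contour :
  @is_derive C_AbsRing C_NormedModule (F lam) (contour k phi R) (dF lam (contour k phi R)).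
Proof.
  pose proof cos_phi_pos; pose proof sin_phi_pos.
  rewrite contour_eq. apply is_derive_F; simpl; fold c s.
  - nra.
  - destruct HR as [HRpos | <-]; [right; nra | left; lra].
Qed.

Lemma contour_Apollonius :
  (k * Cmod (contour k phi R)) ^ 2 - ((1 - k) * Cmod (1 - contour k phi R)) ^ 2
  = R * (2 * k * (1 - k) * c - R * (1 - 2 * k)).
Proof.
  rewrite contour_eq, one_minus_pair, !Rpow_mult_distr, !Cmod2_alt. simpl; fold c s.
  pose proof (sin2_cos2 phi) as Hcs; unfold Rsqr in Hcs; fold c s in Hcs.
  transitivity (R * (2 * k * (1 - k) * c - R * (1 - 2 * k) * (s * s + c * c))); [ring|].
  rewrite Hcs; ring.
Qed.

Lemma Cmod_dF_contour_ge_ln : 0 < lam -> R * (1 - 2 * k) <= 2 * k * (1 - k) * c ->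
  ln (lam * (1 - k) / k) <= Cmod (dF lam (contour k phi R)).
Proof.
  intros Hlam Hinside. pose proof cos_phi_pos; pose proof sin_phi_pos.
  assert (Hz : 0 < Cmod (contour k phi R)).
  { apply Cmod_gt_0. rewrite contour_eq. intros E; injection E; fold c; nra. }
  assert (H1z : 0 < Cmod (1 - contour k phi R)).
  { apply Cmod_gt_0. rewrite contour_eq, one_minus_pair. intros E; injection E; fold c s.
    destruct HR as [HRpos | <-]; nra. }
  assert (Hratio : (1 - k) * Cmod (1 - contour k phi R) <= k * Cmod (contour k phi R)).
  { pose proof contour_Apollonius as Hap; fold c in Hap.
    assert (0 <= R * (2 * k * (1 - k) * c - R * (1 - 2 * k))) by (apply Rmult_le_pos; lra).
    apply Rsqr_incr_0_var; [unfold Rsqr; simpl in Hap; lra | nra]. }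
  eapply Rle_trans; [apply (Re_dF_ge lam k (contour k phi R)); assumption|].
  eapply Rle_trans; [apply Rle_abs | apply re_le_Cmod].
Qed.

Lemma Cmod_dF_contour_gt_angle :
  2 * k * (1 - k) * c < R * (1 - 2 * k) \/ 2 <= R ->
  PI / 2 - phi < Cmod (dF lam (contour k phi R)).
Proof.
  intros Hfar. pose proof cos_phi_pos; pose proof sin_phi_pos.
  assert (Hc1 : c <= 1) by apply COS_bound.
  assert (Hkc : 0 < k * (1 - k) * c) by (apply Rmult_lt_0_compat; nra).
  assert (HRpos : 0 < R) by (destruct Hfar; [destruct HR as [|<-]; lra | lra]).
  assert (Hcs : s ^ 2 + c ^ 2 = 1)
    by (pose proof (sin2_cos2 phi) as Hsc; unfold Rsqr in Hsc; fold c s in Hsc; lra).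
  assert (Hangle : cos phi * ((1 - k + R * c) * (1 - (1 - k + R * c)) - (R * s) ^ 2)
                   < sin phi * (R * s)).
  { fold c s.
    assert (Hxy : (1 - k + R * c) * (1 - (1 - k + R * c)) - (R * s) ^ 2
                  = k * (1 - k) - R * c * (1 - 2 * k) - R ^ 2 * (s ^ 2 + c ^ 2)) by ring.
    rewrite Hxy, Hcs.
    destruct Hfar as [Hfar | Hfar].
    - assert (0 <= k * (R * s ^ 2)) by (apply Rmult_le_pos; [lra | apply Rmult_le_pos; nra]).
      assert (R * (1 - 2 * k) * (s ^ 2 + c ^ 2) = R * (1 - 2 * k)) by (rewrite Hcs; ring).
      assert (0 <= R ^ 2 * c) by (apply Rmult_le_pos; nra).
      lra.
    - assert (0 <= R * c * (c * (1 - 2 * k) + 1)) by (apply Rmult_le_pos; nra).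
      assert (0 < c * (R * (R - 1) - k * (1 - k))) by (apply Rmult_lt_0_compat; nra).
      assert (0 <= R * s ^ 2) by (apply Rmult_le_pos; nra).
      lra. }
  eapply Rlt_le_trans; [|eapply Rle_trans; [apply Rle_abs | apply im_le_Cmod]].
  rewrite contour_eq. apply Im_dF_gt; fold c s; try nra; assumption.
Qed.

End Contour.

Lemma inv_lt_mul_one_sub s lam k : 1 < s -> 1 / (s - 1) <= lam -> 0 < k < / s ->
  / s < lam * (1 - k).
Proof.
  intros Hs Hlam Hk.
  assert (Hlam_s : 1 <= lam * (s - 1)).
  { apply (Rmult_le_compat_r (s - 1)) in Hlam; [|lra].
    unfold Rdiv in Hlam; rewrite Rmult_1_l, Rinv_l in Hlam by lra. lra. }
  assert (Hks : k * s < 1).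
  { pose proof (Rmult_lt_compat_r s _ _ ltac:(lra) (proj2 Hk)) as Hks.
    rewrite Rinv_l in Hks by lra. exact Hks. }
  apply Rmult_lt_reg_r with s; [lra|]. rewrite Rinv_l by lra. nra.
Qed.

Theorem lemma4p1 (delta t lam k phi : R) :
  0 < delta < 1 -> 1 < t ->
  1 / (Rpower t (1 - delta) - 1) <= lam ->
  lam <= Rpower t (1 - delta) - 1 ->
  0 < k < Rpower t (delta - 1) ->
  (0 <= ln lam -> 0 < phi < PI / 2) ->
  (ln lam < 0 -> 0 < phi < atan (PI / Rabs (ln lam))) ->
  (forall R : R, 0 <= R ->
     exists d : C, @is_derive C_AbsRing C_NormedModule (F lam) (contour k phi R) d /\
       Cmod d > Rmin (PI / 2 - phi) (ln (Rpower t (delta - 1) / k)))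
  /\
  (exists R0 : R, forall R : R, R0 <= R ->
     exists d : C, @is_derive C_AbsRing C_NormedModule (F lam) (contour k phi R) d /\
       Cmod d > PI / 2 - phi).
Proof.
  intros Hdelta Ht Hlam _ Hk Hphi_pos Hphi_neg.
  replace (delta - 1) with (- (1 - delta)) in * by ring.
  rewrite Rpower_Ropp in *.
  set (s := Rpower t (1 - delta)) in *.
  assert (Hs : 1 < s) by (rewrite <- (Rpower_O t) by lra; apply Rpower_lt; lra).
  assert (Hk1 : 0 < k < 1).
  { split; [lra|]. apply Rlt_trans with (/ s); [lra|].
    rewrite <- Rinv_1. apply Rinv_lt_contravar; lra. }
  assert (Hphi : 0 < phi < PI / 2).
  { destruct (Rle_lt_dec 0 (ln lam)) as [|Hneg]; [auto|].
    pose proof (atan_bound (PI / Rabs (ln lam))). specialize (Hphi_neg Hneg). lra. }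
  assert (Hlam_pos : 0 < lam)
    by (apply Rlt_le_trans with (1 / (s - 1)); [apply Rdiv_lt_0_compat|]; lra).
  assert (Hln : ln (/ s / k) < ln (lam * (1 - k) / k)).
  { apply ln_increasing; [apply Rdiv_lt_0_compat; [apply Rinv_0_lt_compat|]; lra|].
    unfold Rdiv; apply Rmult_lt_compat_r; [apply Rinv_0_lt_compat; lra|].
    now apply inv_lt_mul_one_sub. }
  split.
  - intros R HR. exists (dF lam (contour k phi R)). split; [apply is_derive_F_contour; assumption|].
    destruct (Rle_lt_dec (R * (1 - 2 * k)) (2 * k * (1 - k) * cos phi)) as [Hinside | Hfar].
    + pose proof (Cmod_dF_contour_ge_ln lam k phi R Hk1 Hphi HR Hlam_pos Hinside).
      pose proof (Rmin_r (PI / 2 - phi) (ln (/ s / k))). lra.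
    + pose proof (Cmod_dF_contour_gt_angle lam k phi R Hk1 Hphi HR (or_introl Hfar)).
      pose proof (Rmin_l (PI / 2 - phi) (ln (/ s / k))). lra.
  - exists 2. intros R HR. exists (dF lam (contour k phi R)).
    split; [apply is_derive_F_contour; lra|].
    apply Rlt_gt, (Cmod_dF_contour_gt_angle lam k phi R Hk1 Hphi); [lra | right; assumption].
Qed.
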